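(* Let $n$ be a positive integer, let $A(n)=(a_{ij})_{i,j\in\mathbb{N}}$ be the greedy matrix described in the context, and let $\sigma=2n^3-n(n-3)$. Then there exist integers $pp\geq 0$ and $p\geq 1$ such that $a_{i+p,j+p}=a_{ij}$ for all $i>pp$ and all $j\ge 1$, and $pp+p\leq 2^{\sigma^2}$.
   Context: $\mathbb{N}=\{1,2,3,\dots\}$. Fix a positive integer $n$. The infinite $\{0,1\}$-matrix $A(n)=(a_{ij})_{i,j\in\mathbb{N}}$ is defined recursively. Its entries are determined row by row (row $1$ first), and within each row from left to right, so that $a_{kl}$ is determined after all $a_{ij}$ with $i<k$ and all $a_{kj}$ with $j<l$. One sets $a_{kl}=1$ if and only if all of the following hold: (1) $\sum_{j<l}a_{kj}<n+1$; (2) $\sum_{i<k}a_{il}<n+1$; (3) there is no pair $(i,j)$ with $1\le i<k$, $1\le j<l$ and $a_{ij}=a_{il}=a_{kj}=1$. Otherwise $a_{kl}=0$. *)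

From mathcomp Require Import all_boot.
Set Implicit Arguments. Unset Strict Implicit. Unset Printing Implicit Defensive.

(* Entries are indexed by positive naturals (1-based); entries with a zero
   index are irrelevant and set to false. *)

(* One greedy step: given a function f that is already correct on all
   positions (i,j) with i+j < k+l, compute a_{kl}. *)
Definition greedy_step (n : nat) (f : nat -> nat -> bool) (k l : nat) : bool :=
  [&& 0 < k, 0 < l,
      count (fun j => f k j) (iota 1 l.-1) < n.+1,
      count (fun i => f i l) (iota 1 k.-1) < n.+1 &
      ~~ has (fun i => has (fun j => [&& f i j, f i l & f k j]) (iota 1 l.-1))
             (iota 1 k.-1)].

(* Since a_{kl} only depends on entries a_{ij} with i <= k, j <= l,
   (i,j) <> (k,l), this implements the row-by-row, left-to-right recursion. *)
Fixpoint greedy_upto (n N : nat) : nat -> nat -> bool :=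
  match N with
  | 0 => fun _ _ => false
  | N'.+1 => let f := greedy_upto n N' in
             fun k l => if k + l <= N' then f k l else greedy_step n f k l
  end.

Definition greedyA (n k l : nat) : bool := greedy_upto n (k + l) k l.

From mathcomp Require Import all_boot zify.
Set Implicit Arguments. Unset Strict Implicit. Unset Printing Implicit Defensive.

(* Every row and every column of A(n) holds at most n + 1 ones.  Row k holds
   exactly n + 1 ones among its first k - 1 + (n^3 + n + 1) columns: at most
   k - 1 of these columns are saturated by the rows above, and each other
   column with a zero in row k is blocked by a rectangle through one of the
   at most n ones of row k, of which there are at most n^3.  Similarly
   column l holds n + 1 ones among its first l + 2n^3 + 2n rows.  So A(n)
   lives in a diagonal band of width w = 3n^3 + 3n + 1, and by the recursion,
   once the band parts of w consecutive rows reappear p rows further down,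
   the matrix is periodic with period p along the diagonal.  These band parts
   take at most C(w, n + 1)^w values, which gives the bound by pigeonhole for
   n >= 3; for n = 1, 2 the period is read off from the first rows. *)

Lemma expn3 m : m ^ 3 = m * m * m.
Proof. by rewrite !expnS expn0 muln1 mulnA. Qed.

Lemma count_sumE (T : Type) (p : pred T) s : count p s = \sum_(x <- s) p x.
Proof. by rewrite -sum1_count big_mkcond. Qed.

Lemma count_orb_le (T : Type) (p q : pred T) s :
  count (fun x => p x || q x) s <= count p s + count q s.
Proof. by rewrite -(count_predUI p q) leq_addr. Qed.

Lemma sub_in_count (T : eqType) (p q : pred T) s :
  {in s, subpred p q} -> count p s <= count q s.
Proof.
move=> pq; rewrite (@eq_in_count _ _ (predI p (mem s))) => [|x xs]; last by rewrite /= xs andbT.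
by apply: sub_count => x /andP[px xs]; apply: pq.
Qed.

Lemma count_has_le (I X : Type) (sI : seq I) (sX : seq X) (Q : I -> pred X) :
  count (fun x => has (Q^~ x) sI) sX <= \sum_(i <- sI) count (Q i) sX.
Proof.
elim: sI => [|i sI IH] /=; first by rewrite big_nil; elim: sX.
by rewrite big_cons; apply: leq_trans (count_orb_le _ _ _) _; apply: leq_add.
Qed.

Lemma count_has2_le (X Y Z : eqType) (sX : seq X) (sY : seq Y) (sZ : seq Z)
    (p : pred Y) (q : Y -> pred Z) (r : Y -> Z -> pred X) L M N :
  count p sY <= L ->
  {in sY, forall y, p y -> count (q y) sZ <= M} ->
  {in sY & sZ, forall y z, p y -> q y z -> count (r y z) sX <= N} ->
  count (fun x => has (fun y => has (fun z => [&& p y, q y z & r y z x]) sZ) sY) sX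
    <= L * M * N.
Proof.
move=> pL qM rN; apply: leq_trans (count_has_le _ _ _) _.
apply: (@leq_trans (\sum_(y <- sY) p y * (M * N))); last first.
  by rewrite -big_distrl /= -count_sumE mulnA !leq_mul2r pL !orbT.
rewrite big_seq [leqRHS]big_seq; apply: leq_sum => y yY.
apply: leq_trans (count_has_le _ _ _) _.
case: (boolP (p y)) => py; last by rewrite big1 // => z _; rewrite count_pred0.
apply: (@leq_trans (\sum_(z <- sZ) q y z * N)).
  rewrite big_seq [leqRHS]big_seq; apply: leq_sum => z zZ.
  case: (boolP (q y z)) => qz; last by rewrite count_pred0.
  by rewrite mul1n; apply: rN.
by rewrite -big_distrl /= -count_sumE mul1n leq_mul2r qM ?orbT.
Qed.

Lemma count_split (T : Type) (p q : pred T) s :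
  count (fun x => p x && q x) s + count (fun x => p x && ~~ q x) s = count p s.
Proof. by elim: s => //= x s <-; case: (p x); case: (q x) => /=; lia. Qed.

Lemma sum_count_le (T : Type) (s : seq T) (f : T -> nat) c :
  c * count (fun x => c <= f x) s <= \sum_(x <- s) f x.
Proof.
rewrite count_sumE big_distrr /=; apply: leq_sum => x _.
by case: (leqP c (f x)); rewrite ?muln0 ?muln1.
Qed.

Lemma leq_count_iota (p : pred nat) m m' : m <= m' -> count p (iota 1 m) <= count p (iota 1 m').
Proof. by move=> le_mm'; rewrite -(subnKC le_mm') iotaD count_cat leq_addr. Qed.

Lemma count_iota1S (p : pred nat) m : count p (iota 1 m.+1) = count p (iota 1 m) + p m.+1.
Proof. by rewrite -[m.+1]addn1 iotaD count_cat /= add1n addn0 addn1. Qed.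

Lemma iota1D p m : iota 1 (p + m) = iota 1 p ++ [seq p + i | i <- iota 1 m].
Proof. by rewrite iotaD -iotaDl addn1. Qed.

Lemma card_set_count m (p : pred nat) : #|[set o : 'I_m | p o]| = count p (iota 0 m).
Proof.
rewrite -sum1_card -sum1_count -[m in iota 0 m]subn0 -/(index_iota 0 m) big_mkord.
by apply: eq_bigl => o; rewrite inE.
Qed.

Lemma pigeonhole_nat (T : finType) (A : {pred T}) (f : nat -> T) :
  (forall x, x <= #|A| -> f x \in A) -> exists x y, x < y <= #|A| /\ f x = f y.
Proof.
move=> fA; have : ~~ uniq [seq f x | x <- iota 0 #|A|.+1].
  apply/negP => /(@uniq_leq_size _ _ (enum A)) le_size.
  suff : #|A|.+1 <= #|A| by rewrite ltnn.
  rewrite [in leqRHS]cardE -[in leqLHS](size_iota 0 #|A|.+1) -(size_map f); apply: le_size.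
  by move=> y /mapP[x]; rewrite mem_iota mem_enum => x_le ->; apply: fA; lia.
case/(uniqPn (f 0)) => x [y []]; rewrite size_map size_iota => xy y_lt.
by rewrite !(nth_map 0) ?size_iota ?nth_iota //; try lia; exists x, y; split => //; lia.
Qed.

Lemma card_ffun_sets (T U : finType) k :
  #|[set F : {ffun T -> {set U}} | [forall x, #|F x| == k]]| = 'C(#|U|, k) ^ #|T|.
Proof.
have -> : #|[set F : {ffun T -> {set U}} | [forall x, #|F x| == k]]|
          = #|family (fun _ : T => [pred X : {set U} | #|X| == k])|.
  by apply: eq_card => F; rewrite inE; apply/forallP/familyP => F_k x; have := F_k x.
rewrite card_family [#|T|]cardE -card_draws /image_mem; elim: (enum T) => //= x s ->.
by rewrite expnS; congr (_ * _); apply: eq_card => X; rewrite inE.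
Qed.

Section GreedyMatrix.

Variable n : nat.
Local Notation a := (greedyA n).

Lemma greedy_step_ext f g k l :
  (forall i j, i <= k -> j <= l -> i + j < k + l -> f i j = g i j) ->
  greedy_step n f k l = greedy_step n g k l.
Proof.
move=> fg; rewrite /greedy_step.
have -> : count (f k) (iota 1 l.-1) = count (g k) (iota 1 l.-1).
  by apply: eq_in_count => j; rewrite mem_iota => j_lt; apply: fg; lia.
have -> : count (f^~ l) (iota 1 k.-1) = count (g^~ l) (iota 1 k.-1).
  by apply: eq_in_count => i; rewrite mem_iota => i_lt; apply: fg; lia.
congr [&& _, _, _, _ & ~~ _]; apply: eq_in_has => i; rewrite mem_iota => i_lt.
by apply: eq_in_has => j; rewrite mem_iota => j_lt; rewrite !fg //; lia.
Qed.

Lemma greedy_upto_greedyA N k l : k + l <= N -> greedy_upto n N k l = a k l.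
Proof.
elim: N k l => [|N IH] k l klN; first by have [-> ->] : k = 0 /\ l = 0 by lia.
rewrite /=; case: ifP => [/IH //|klN'].
by rewrite /greedyA (_ : k + l = N.+1) /= ?klN' //; lia.
Qed.

Lemma greedyA_step k l : a k l = greedy_step n a k l.
Proof.
case kl: (k + l) => [|N]; first by have [-> ->] : k = 0 /\ l = 0 by lia.
rewrite {1}/greedyA kl /= (_ : k + l <= N = false); last by lia.
by apply: greedy_step_ext => i j _ _ ij_lt; apply: greedy_upto_greedyA; lia.
Qed.

Definition row_count k l := count (a k) (iota 1 l).
Definition col_count l k := count (a^~ l) (iota 1 k).
Definition closes_rectangle k l :=
  has (fun i => has (fun j => [&& a i j, a i l & a k j]) (iota 1 l.-1)) (iota 1 k.-1).

Lemma greedyAE k l : a k l =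
  [&& 0 < k, 0 < l, row_count k l.-1 <= n, col_count l k.-1 <= n & ~~ closes_rectangle k l].
Proof. exact: greedyA_step. Qed.

Lemma greedyA0l l : a 0 l = false.
Proof. by rewrite greedyAE. Qed.

Lemma greedyAk0 k : a k 0 = false.
Proof. by rewrite greedyAE andbF. Qed.

Lemma row_count_lt k l : a k l -> row_count k l.-1 <= n.
Proof. by rewrite greedyAE => /and5P[]. Qed.

Lemma col_count_lt k l : a k l -> col_count l k.-1 <= n.
Proof. by rewrite greedyAE => /and5P[]. Qed.

Lemma greedyA_gt0 k l : a k l -> 0 < k /\ 0 < l.
Proof. by rewrite greedyAE => /and5P[]. Qed.

Lemma row_count_le k l : row_count k l <= n.+1.
Proof.
elim: l => // l IH; rewrite /row_count count_iota1S.
by case a_kl: (a k l.+1); [rewrite addn1 ltnS (row_count_lt a_kl) | rewrite addn0].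
Qed.

Lemma col_count_le l k : col_count l k <= n.+1.
Proof.
elim: k => // k IH; rewrite /col_count (count_iota1S (a^~ l)).
by case a_kl: (a k.+1 l); [rewrite addn1 ltnS (col_count_lt a_kl) | rewrite addn0].
Qed.

Lemma leq_row_count k l l' : l <= l' -> row_count k l <= row_count k l'.
Proof. exact: leq_count_iota. Qed.

Lemma leq_col_count l k k' : k <= k' -> col_count l k <= col_count l k'.
Proof. exact: leq_count_iota. Qed.

Lemma count_row_others k j' B : 0 < j' <= B -> a k j' ->
  count (fun j => a k j && (j' != j)) (iota 1 B) <= n.
Proof.
move=> j'_in a_kj'.
have : 0 < count (fun j => a k j && ~~ (j' != j)) (iota 1 B).
  by rewrite -has_count; apply/hasP; exists j'; rewrite ?mem_iota ?a_kj' ?eqxx //; lia.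
have := row_count_le k B; rewrite /row_count -(count_split (a k) (fun j => j' != j)); lia.
Qed.

Lemma count_col_others l i' K : 0 < i' <= K -> a i' l ->
  count (fun i => a i l && (i' != i)) (iota 1 K) <= n.
Proof.
move=> i'_in a_i'l.
have : 0 < count (fun i => a i l && ~~ (i' != i)) (iota 1 K).
  by rewrite -has_count; apply/hasP; exists i'; rewrite ?mem_iota ?a_i'l ?eqxx //; lia.
have := col_count_le l K; rewrite /col_count -(count_split (a^~ l) (fun i => i' != i)); lia.
Qed.

Lemma sum_row_count K B :
  \sum_(i <- iota 1 K) row_count i B = \sum_(j <- iota 1 B) col_count j K.
Proof.
rewrite /row_count /col_count; under eq_bigr do rewrite count_sumE.
by rewrite exchange_big /=; apply: eq_bigr => j _; rewrite count_sumE.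
Qed.

Lemma count_saturated_cols k B : count (fun j => n < col_count j k) (iota 1 B) <= k.
Proof.
rewrite -(leq_pmul2l (ltn0Sn n)); apply: leq_trans (sum_count_le _ _ _) _.
rewrite -sum_row_count; apply: (@leq_trans (\sum_(i <- iota 1 k) n.+1)).
  by apply: leq_sum => i _; apply: row_count_le.
by rewrite big_const_seq count_predT size_iota iter_addn_0.
Qed.

Lemma count_saturated_rows l K : count (fun i => n < row_count i l) (iota 1 K) <= l.
Proof.
rewrite -(leq_pmul2l (ltn0Sn n)); apply: leq_trans (sum_count_le _ _ _) _.
rewrite sum_row_count; apply: (@leq_trans (\sum_(j <- iota 1 l) n.+1)).
  by apply: leq_sum => j _; apply: col_count_le.
by rewrite big_const_seq count_predT size_iota iter_addn_0.
Qed.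

Definition upper_width := n ^ 3 + n + 1.
Definition lower_width := 2 * n ^ 3 + 2 * n.

Lemma row_count_saturated k : 0 < k -> row_count k (k.-1 + upper_width) = n.+1.
Proof.
move=> k_gt0; set B := k.-1 + upper_width.
apply/eqP; rewrite eqn_leq row_count_le /=; apply: contraT; rewrite -ltnNge ltnS => row_k.
pose free j := col_count j k.-1 <= n.
pose blocked j := has (fun j' => has (fun i =>
  [&& a k j', a i j' & a i j && (j' != j)]) (iota 1 k.-1)) (iota 1 B).
have free_ge : upper_width <= count free (iota 1 B).
  have := count_saturated_cols k.-1 B; have := count_predC free (iota 1 B).
  rewrite size_iota (@eq_count _ (predC free) (fun j => n < col_count j k.-1)) => [|j].
    by rewrite /B; lia.
  by rewrite /= /free ltnNge.
have free_le : count free (iota 1 B) <= row_count k B + count blocked (iota 1 B).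
  apply: leq_trans (count_orb_le _ _ _); apply: sub_in_count => j.
  rewrite mem_iota /free => j_in free_j; apply/orP; case a_kj: (a k j); [by left | right].
  move: a_kj; rewrite greedyAE k_gt0 (leq_trans (leq_row_count _ _) row_k) /B; last by lia.
  rewrite free_j (_ : 0 < j); last by lia.
  move/negbFE/hasP => [i i_in /hasP[j' j'_in /and3P[a_ij' a_ij a_kj']]].
  move: j'_in; rewrite !mem_iota => j'_in.
  apply/hasP; exists j'; first by rewrite mem_iota; lia.
  by apply/hasP; exists i; rewrite // a_kj' a_ij' a_ij; apply/eqP; lia.
have blocked_le : count blocked (iota 1 B) <= n * n * n.
  apply: count_has2_le => [//|j' _ a_kj'|j' i j'_in _ _ a_ij'].
    by apply: col_count_lt a_kj'.
  by apply: count_row_others a_ij'; move: j'_in; rewrite mem_iota; lia.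
by move: free_ge free_le blocked_le; rewrite /upper_width expn3; lia.
Qed.

Lemma row_count_full k l : 0 < k -> k.-1 + upper_width <= l -> row_count k l = n.+1.
Proof.
move=> k_gt0 kl; apply/eqP; rewrite eqn_leq row_count_le -(row_count_saturated k_gt0).
exact: leq_row_count.
Qed.

(* Among the rows [l .. l + lower_width] at most [n ^ 3 + n] are saturated by the
   columns left of column [l], because the rows above [l - upper_width] already
   saturate them; the others have a one in column [l] or close a rectangle. *)
Lemma col_count_saturated l : 0 < l -> col_count l (l + lower_width) = n.+1.
Proof.
move=> l_gt0; set K := l + lower_width; set rows := iota l lower_width.+1.
apply/eqP; rewrite eqn_leq col_count_le /=; apply: contraT; rewrite -ltnNge ltnS => col_l.
have iotaK : iota 1 K = iota 1 l.-1 ++ rows.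
  by rewrite (_ : K = l.-1 + lower_width.+1) ?iotaD ?add1n ?prednK //; lia.
pose saturated k := n < row_count k l.-1.
pose blocked k := has (fun i => has (fun j =>
  [&& a i l, a i j & a k j && (i != k)]) (iota 1 l.-1)) (iota 1 K).
have ones_le : count (a^~ l) rows <= n.
  by apply: leq_trans col_l; rewrite /col_count iotaK count_cat leq_addl.
have saturated_le : count saturated rows <= n ^ 3 + n.
  have top_saturated : l - upper_width <= count saturated (iota 1 l.-1).
    apply: leq_trans (leq_count_iota _ (_ : l - upper_width <= l.-1)); last first.
      by rewrite /upper_width; lia.
    rewrite -{1}(size_iota 1 (l - upper_width)) -count_predT.
    apply: sub_in_count => i; rewrite mem_iota => i_in _.
    by rewrite /saturated row_count_full //; lia.
  have := count_saturated_rows l.-1 K; rewrite iotaK count_cat.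
  by move: top_saturated; rewrite /saturated /upper_width; lia.
have blocked_le : count blocked rows <= n * n * n.
  apply: count_has2_le => [//|i i_in a_il|i j i_in _ _ a_ij].
    exact: row_count_lt a_il.
  apply: leq_trans (count_col_others (K := K) _ a_ij); first by rewrite iotaK count_cat leq_addl.
  by move: i_in; rewrite mem_iota; lia.
have rows_le : lower_width.+1 <= count (a^~ l) rows + count saturated rows + count blocked rows.
  rewrite -addnA; apply: leq_trans (leq_add (leqnn _) (count_orb_le _ _ _)).
  apply: leq_trans (count_orb_le _ _ _).
  rewrite -{1}(size_iota l lower_width.+1) -count_predT; apply: sub_in_count => k.
  rewrite mem_iota => k_in _; case a_kl: (a k l) => //=.
  case: (boolP (saturated k)) => //= not_saturated.
  move: a_kl; rewrite greedyAE l_gt0 (_ : 0 < k); last by lia.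
  rewrite leqNgt not_saturated (leq_trans (leq_col_count _ (_ : k.-1 <= K)) col_l); last by lia.
  move/negbFE/hasP => [i i_in /hasP[j j_in /and3P[a_ij a_il a_kj]]].
  move: i_in; rewrite !mem_iota => i_in.
  apply/hasP; exists i; first by rewrite mem_iota; lia.
  by apply/hasP; exists j; rewrite // a_il a_ij a_kj; apply/eqP; lia.
by move: ones_le saturated_le blocked_le rows_le; rewrite /lower_width expn3; lia.
Qed.

Lemma greedyA_above_band k l : k + upper_width <= l -> a k l = false.
Proof.
move=> kl; apply/negP => a_kl; have [k_gt0 _] := greedyA_gt0 a_kl.
by have := row_count_lt a_kl; rewrite row_count_full //; lia.
Qed.

Lemma greedyA_below_band k l : l + lower_width < k -> a k l = false.
Proof.
move=> lk; apply/negP => a_kl; have [_ l_gt0] := greedyA_gt0 a_kl.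
have := col_count_lt a_kl; have := leq_col_count l (_ : l + lower_width <= k.-1).
by rewrite col_count_saturated //; lia.
Qed.

(* Only rows [x] with a one in column [l] can close a rectangle at [(k, l)],
   hence the weak last hypothesis. *)
Lemma greedyA_shift k l p :
  (forall y, y <= p -> a (k + p) y = false) ->
  (forall x, x <= p -> a x (l + p) = false) ->
  (forall y, 0 < y < l -> a (k + p) (y + p) = a k y) ->
  (forall x, 0 < x < k -> a (x + p) (l + p) = a x l) ->
  (forall x y, 0 < x < k -> 0 < y < l -> a x l -> a (x + p) (y + p) = a x y) ->
  a (k + p) (l + p) = a k l.
Proof.
move=> row_zero col_zero row_eq col_eq inner_eq.
case: (posnP l) => [->|l_gt0]; first by rewrite greedyAk0 row_zero.
case: (posnP k) => [->|k_gt0]; first by rewrite greedyA0l col_zero.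
have El : (l + p).-1 = p + l.-1 by lia.
have Ek : (k + p).-1 = p + k.-1 by lia.
rewrite (greedyAE (k + p)) (greedyAE k) El Ek k_gt0 l_gt0 !addn_gt0 k_gt0 l_gt0 /=.
congr [&& _ <= n, _ <= n & ~~ _].
- rewrite /row_count iota1D count_cat count_map.
  rewrite (@eq_in_count _ _ pred0) => [|y]; last by rewrite mem_iota => y_in; apply: row_zero; lia.
  rewrite count_pred0; apply: eq_in_count => y; rewrite mem_iota => y_in /=.
  by rewrite [p + y]addnC row_eq //; lia.
- rewrite /col_count iota1D count_cat count_map.
  rewrite (@eq_in_count _ _ pred0) => [|x]; last by rewrite mem_iota => x_in; apply: col_zero; lia.
  rewrite count_pred0; apply: eq_in_count => x; rewrite mem_iota => x_in /=.
  by rewrite [p + x]addnC col_eq //; lia.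
rewrite /closes_rectangle El Ek [iota 1 (p + k.-1)]iota1D has_cat has_map.
rewrite (@eq_in_has _ _ pred0) => [|x]; last first.
  by rewrite mem_iota => x_in; apply/hasPn => y _; rewrite col_zero ?andbF //; lia.
rewrite has_pred0 /=; apply: eq_in_has => x; rewrite mem_iota => x_in /=.
rewrite iota1D has_cat has_map.
rewrite (@eq_in_has _ _ pred0) => [|y]; last first.
  by rewrite mem_iota => y_in; rewrite row_zero ?andbF //; lia.
rewrite has_pred0 /=; apply: eq_in_has => y; rewrite mem_iota => y_in /=.
rewrite [p + x]addnC [p + y]addnC col_eq ?row_eq; try lia.
by case: (boolP (a x l)) => [a_xl|]; rewrite ?andbF // inner_eq //; lia.
Qed.

Definition band_width := upper_width + lower_width.

(* Rows more than [band_width] above row [i] have no ones in the band of row [i]. *)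
Lemma greedyA_shift_window a0 p :
  band_width < a0 ->
  (forall i j, a0 - band_width <= i < a0 -> a (i + p) (j + p) = a i j) ->
  forall i j, a0 - band_width <= i -> a (i + p) (j + p) = a i j.
Proof.
rewrite /band_width => a0_gt window i; elim/ltn_ind: i => i IHi j i_ge.
case: (ltnP i a0) => [i_lt|i_ge_a0]; first by apply: window; lia.
have far x y : x < a0 - (upper_width + lower_width) -> a0 <= y + lower_width ->
    a x y = false /\ a (x + p) (y + p) = false.
  by move=> x_lt y_ge; split; apply: greedyA_above_band; lia.
elim/ltn_ind: j => j IHj.
case: (ltnP (j + lower_width) i) => [j_low|j_ge]; first by rewrite !greedyA_below_band //; lia.
apply: greedyA_shift => [y y_le|x x_le|y y_in|x x_in|x y x_in y_in a_xj].
- by apply: greedyA_below_band; lia.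
- by apply: greedyA_above_band; lia.
- by apply: IHj; lia.
- case: (ltnP x (a0 - (upper_width + lower_width))) => [x_lt|x_ge].
    by have [-> ->] := far x j x_lt (leq_trans i_ge_a0 j_ge).
  by apply: IHi; lia.
case: (ltnP x (a0 - (upper_width + lower_width))) => [x_lt|x_ge].
  by have [a_xj0 _] := far x j x_lt (leq_trans i_ge_a0 j_ge); rewrite a_xj0 in a_xj.
by apply: IHi; lia.
Qed.

Definition band_windows_agree a0 p := forall i o,
  a0 - band_width <= i < a0 -> o < band_width ->
  a (i + p) (i + p - lower_width + o) = a i (i - lower_width + o).

Lemma greedyA_periodic a0 p : band_width + lower_width < a0 -> band_windows_agree a0 p ->
  forall i j, a0 - band_width <= i -> a (i + p) (j + p) = a i j.
Proof.
move=> a0_gt agree; apply: greedyA_shift_window; first by lia.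
move=> i j i_in; have i_gt : lower_width < i by lia.
case: (ltnP (j + lower_width) i) => [j_low|j_ge]; first by rewrite !greedyA_below_band //; lia.
case: (ltnP j (i + upper_width)) => [j_lt|j_high]; last by rewrite !greedyA_above_band //; lia.
have := agree i (j - (i - lower_width)) i_in.
have -> : i - lower_width + (j - (i - lower_width)) = j by lia.
have -> : i + p - lower_width + (j - (i - lower_width)) = j + p by lia.
by apply; rewrite /band_width; lia.
Qed.

Definition band_window k : {ffun 'I_band_width -> {set 'I_band_width}} :=
  [ffun d : 'I_band_width =>
    [set o : 'I_band_width | a (k - d.+1) (k - d.+1 - lower_width + o)]].

Lemma band_window_agree a0 p : band_window a0 = band_window (a0 + p) -> band_windows_agree a0 p.
Proof.
move=> eq_window i o i_in o_lt; have d_lt : a0 - i.+1 < band_width by lia.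
have := congr1 (fun F : {ffun 'I_band_width -> {set 'I_band_width}} =>
  Ordinal o_lt \in F (Ordinal d_lt)) eq_window.
rewrite !ffunE !inE /= (_ : a0 - (a0 - i.+1).+1 = i); last by lia.
by rewrite (_ : a0 + p - (a0 - i.+1).+1 = i + p) //; lia.
Qed.

Lemma card_band_window k d : band_width + lower_width < k -> #|band_window k d| = n.+1.
Proof.
move=> k_gt; set i := k - d.+1.
have i_gt : lower_width < i by have := ltn_ord d; rewrite /i /band_width in k_gt *; lia.
have -> : n.+1 = row_count i ((i - lower_width).-1 + band_width).
  by rewrite row_count_full //; rewrite /band_width; lia.
rewrite ffunE (card_set_count _ (fun o => a i (i - lower_width + o))) /row_count iotaD count_cat.
rewrite [X in _ = X + _](@eq_in_count _ _ pred0) => [|x]; last first.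
  by rewrite mem_iota => x_in; apply: greedyA_below_band; lia.
rewrite count_pred0 add1n prednK ?subn_gt0 // add0n.
have -> : iota (i - lower_width) band_width = [seq i - lower_width + o | o <- iota 0 band_width].
  by rewrite -iotaDl addn0.
by rewrite count_map.
Qed.

Lemma band_window_repeat : exists a0 p,
  [/\ band_width + lower_width < a0, 0 < p,
      a0 + p <= (band_width + lower_width).+1 + 'C(band_width, n.+1) ^ band_width
    & band_window a0 = band_window (a0 + p)].
Proof.
pose S := [set F : {ffun 'I_band_width -> {set 'I_band_width}} | [forall d, #|F d| == n.+1]].
have [|x [y [/andP[xy yS] eq_xy]]] :=
  @pigeonhole_nat _ S (fun x => band_window ((band_width + lower_width).+1 + x)).
  by move=> x _; rewrite inE; apply/forallP => d; rewrite card_band_window //; lia.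
exists ((band_width + lower_width).+1 + x), (y - x); split; try lia.
  by move: yS; rewrite card_ffun_sets card_ord; lia.
by rewrite eq_xy; congr band_window; lia.
Qed.

Lemma greedyA_eventually_periodic a0 p :
  band_width + lower_width < a0 -> 0 < p -> band_windows_agree a0 p ->
  exists pp p', [/\ 0 < p', forall i j, pp < i -> a (i + p') (j + p') = a i j & pp + p' <= a0 + p].
Proof.
move=> a0_gt p_gt0 agree; exists (a0 - band_width).-1, p; split => //; last by lia.
by move=> i j i_gt; apply: greedyA_periodic agree _ _ _ => //; lia.
Qed.

End GreedyMatrix.

Lemma binomial_le_exp m k : 'C(m, k) <= m ^ k.
Proof.
have ffact_le k' m' : m' ^_ k' <= m' ^ k'.
  elim: k' m' => // k' IH m'; rewrite ffactnS expnS leq_mul //.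
  by apply: leq_trans (IH _) _; case: k' {IH} => // k'; rewrite leq_exp2r // leq_pred.
by apply: leq_trans (ffact_le k m); rewrite -bin_ffact leq_pmulr // fact_gt0.
Qed.

Lemma band_width_le_exp n : 3 <= n -> band_width n <= 2 ^ (n + 4).
Proof.
rewrite /band_width /upper_width /lower_width expn3.
elim: n => // n IH n_ge; case: (ltngtP n 3) => [n_lt|n_gt|-> //]; first by have -> : n = 2 by lia.
rewrite addSn expnS; apply: leq_trans (_ : _ <= 2 * (3 * (n * n * n) + 3 * n + 1)) _.
  by nia.
by rewrite leq_mul2l /=; have := IH (ltnW n_gt); lia.
Qed.

Lemma band_window_bound n : 3 <= n ->
  (band_width n + lower_width n).+1 + 'C(band_width n, n.+1) ^ band_width n
    <= 2 ^ ((2 * n ^ 3 + 3 * n - n ^ 2) ^ 2).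
Proof.
move=> n_ge; set W := band_width n; set X := (n + 4) * (n.+1 * W).
have W_le := band_width_le_exp n_ge.
have EW : W = 3 * (n * n * n) + 3 * n + 1.
  by rewrite /W /band_width /upper_width /lower_width expn3; lia.
have binomial_le : 'C(W, n.+1) ^ W <= 2 ^ X.
  rewrite /X mulnA expnM leq_exp2r; last by rewrite EW addn1.
  by apply: leq_trans (binomial_le_exp _ _) _; rewrite expnM leq_exp2r.
have prefix_le : (W + lower_width n).+1 <= 2 ^ X.
  apply: ltnW; apply: leq_trans (ltn_expl X (isT : 1 < 2)).
  by rewrite /X EW /lower_width expn3; nia.
apply: leq_trans (_ : _ <= 2 ^ X.+1) _; first by rewrite expnS mul2n -addnn leq_add.
rewrite leq_exp2l // /X EW expn3 -!mulnn.
have [m ->] : exists m, n = m + 3 by exists (n - 3); lia.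
nia.
Qed.

(* A table [T] lists, row by row, the columns of the ones of a matrix. *)
Definition table_entry (T : seq (seq nat)) i j := j \in nth [::] T i.

Definition table_greedy n T K M := all (fun k => all (fun l =>
  if (k <= l + lower_width n) && (l < k + upper_width n)
  then table_entry T k l == greedy_step n (table_entry T) k l
  else ~~ table_entry T k l) (iota 0 M.+1)) (iota 0 K.+1).

Lemma table_greedyP n T K M : table_greedy n T K M ->
  forall k l, k <= K -> l <= M -> greedyA n k l = table_entry T k l.
Proof.
move=> T_greedy k l; have [N] := ubnP (k + l); elim: N k l => // N IH k l kl k_le l_le.
have k_in : k \in iota 0 K.+1 by rewrite mem_iota.
have l_in : l \in iota 0 M.+1 by rewrite mem_iota.
move: (allP (allP T_greedy k k_in) l l_in); case: ifP => [_ /eqP ->|/negbT]; last first.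
  by rewrite negb_and -!ltnNge => /orP[?|?] /negbTE ->;
     [apply: greedyA_below_band | apply: greedyA_above_band].
by rewrite greedyA_step; apply: greedy_step_ext => i j i_le j_le ij_lt; apply: IH; lia.
Qed.

Definition table_windows_agree n T a0 p := all (fun i => all (fun o =>
  table_entry T (i + p) (i + p - lower_width n + o) == table_entry T i (i - lower_width n + o))
  (iota 0 (band_width n))) (iota (a0 - band_width n) (band_width n)).

Lemma table_windows_agreeP n T K M a0 p :
  table_greedy n T K M -> table_windows_agree n T a0 p ->
  band_width n < a0 -> a0 + p <= K.+1 -> a0 + p + upper_width n <= M.+2 ->
  band_windows_agree n a0 p.
Proof.
move=> T_greedy T_agree a0_gt le_K le_M i o i_in o_lt.
rewrite !(table_greedyP T_greedy); try by rewrite /band_width in a0_gt o_lt; lia.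
have i_in' : i \in iota (a0 - band_width n) (band_width n) by rewrite mem_iota; lia.
have o_in : o \in iota 0 (band_width n) by rewrite mem_iota.
exact/eqP/(allP (allP T_agree i i_in') o o_in).
Qed.
(* The first rows of A(1) and A(2). *)
Definition table1 := [:: [:: ]; [:: 1; 2]; [:: 1; 3]; [:: 2; 3]; [:: 4; 5]; [:: 4; 6]; [:: 5; 6]; [:: 7; 8]; [:: 7; 9]; [:: 8; 9]; [:: 10; 11]; [:: 10; 12]; [:: 11; 12]; [:: 13; 14]; [:: 13; 15]].
Definition table2 := [:: [:: ]; [:: 1; 2; 3]; [:: 1; 4; 5]; [:: 1; 6; 7]; [:: 2; 4; 6]; [:: 2; 5; 7]; [:: 3; 4; 7]; [:: 3; 5; 6]; [:: 8; 9; 10]; [:: 8; 11; 12]; [:: 8; 13; 14]; [:: 9; 11; 13]; [:: 9; 12; 14]; [:: 10; 11; 14]; [:: 10; 12; 13]; [:: 15; 16; 17]; [:: 15; 18; 19]; [:: 15; 20; 21]; [:: 16; 18; 20]; [:: 16; 19; 21]; [:: 17; 18; 21]; [:: 17; 19; 20]; [:: 22; 23; 24]; [:: 22; 25; 26]; [:: 22; 27; 28]; [:: 23; 25; 27]; [:: 23; 26; 28]; [:: 24; 25; 28]; [:: 24; 26; 27]; [:: 29; 30; 31]; [:: 29; 32; 33]; [:: 29; 34; 35]; [:: 30; 32; 34]; [:: 30; 33; 35]; [:: 31; 32; 35]; [:: 31; 33; 34]; [:: 36; 37; 38]; [:: 36; 39; 40]; [:: 36; 41; 42]; [:: 37; 39;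 41]; [:: 37; 40; 42]; [:: 38; 39; 42]; [:: 38; 40; 41]; [:: 43; 44; 45]; [:: 43; 46; 47]; [:: 43; 48; 49]; [:: 44; 46; 48]; [:: 44; 47; 49]; [:: 45; 46; 49]; [:: 45; 47; 48]; [:: 50; 51; 52]; [:: 50; 53; 54]; [:: 50; 55; 56]; [:: 51; 53; 55]; [:: 51; 54; 56]; [:: 52; 53; 56]; [:: 52; 54; 55]; [:: 57; 58; 59]; [:: 57; 60; 61]].

Lemma table1_greedy : table_greedy 1 table1 14 16.
Proof. by vm_compute. Qed.

Lemma table1_windows_agree : table_windows_agree 1 table1 12 3.
Proof. by vm_compute. Qed.

Lemma table2_greedy : table_greedy 2 table2 58 68.
Proof. by vm_compute. Qed.

Lemma table2_windows_agree : table_windows_agree 2 table2 52 7.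
Proof. by vm_compute. Qed.

Theorem theorem3p3 (n : nat) : 0 < n ->
  exists pp p : nat,
    0 < p /\
    (forall i j : nat, pp < i -> 0 < j ->
        greedyA n (i + p) (j + p) = greedyA n i j) /\
    pp + p <= 2 ^ ((2 * n ^ 3 + 3 * n - n ^ 2) ^ 2).
Proof.
move=> n_gt0.
suff [a0 [p [a0_gt p_gt0 le_bound agree]]] : exists a0 p,
    [/\ band_width n + lower_width n < a0, 0 < p,
        a0 + p <= 2 ^ ((2 * n ^ 3 + 3 * n - n ^ 2) ^ 2) & band_windows_agree n a0 p].
  have [pp [p' [p'_gt0 periodic le_a0p]]] := greedyA_eventually_periodic a0_gt p_gt0 agree.
  exists pp, p'; split=> //; split=> [i j i_gt _|]; first exact: periodic.
  exact: leq_trans le_a0p le_bound.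
case: n n_gt0 => [//|[|[|n]]] _.
- exists 12, 3; split => [//|//||].
    by apply: (@leq_trans (2 ^ 4)); rewrite ?leq_exp2l.
  exact: table_windows_agreeP table1_greedy table1_windows_agree _ _ _.
- exists 52, 7; split => [//|//||].
    by apply: (@leq_trans (2 ^ 6)); rewrite ?leq_exp2l.
  exact: table_windows_agreeP table2_greedy table2_windows_agree _ _ _.
have [a0 [p [a0_gt p_gt0 le_bound eq_window]]] := band_window_repeat n.+3.
exists a0, p; split => //; last exact: band_window_agree.
exact: leq_trans le_bound (band_window_bound _).
Qed.
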